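(* Let $A\in\mathbb{C}^{n\times n}$ and $m\in\mathbb{N}=\{1,2,\dots\}$. Then $AA^{\#_m}A=A$ if and only if $\mathrm{Ind}(A)\le 1$.
   Context: For $A\in\mathbb{C}^{n\times n}$: $A^\dagger$ Moore–Penrose inverse, $P_A=AA^\dagger$, $\mathcal{R}(\cdot)$ column space. The index $\mathrm{Ind}(A)$ is the smallest nonnegative integer $k$ with $\mathcal{R}(A^k)=\mathcal{R}(A^{k+1})$ ($A^0=I_n$). The core-EP inverse $A^{\mathrm{cEP}}$ is the unique $X$ with $XAX=X$ and $\mathcal{R}(X)=\mathcal{R}(X^* )=\mathcal{R}(A^k)$. For $m\in\mathbb{N}$, the $m$-weak group inverse is $A^{\mathrm{WG}_m}:=(A^{\mathrm{cEP}})^{m+1}A^m$ and the $m$-weak core inverse is $A^{\#_m}:=A^{\mathrm{WG}_m}P_{A^m}$. *)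

(* The complex numbers are modelled as R[i] = complex R for an
   arbitrary R : realType (complete archimedean ordered field, i.e. the reals). *)
From HB Require Import structures.
From mathcomp Require Import all_boot all_order all_algebra.
From mathcomp Require Import reals complex.
Set Implicit Arguments. Unset Strict Implicit. Unset Printing Implicit Defensive.
Import Order.TTheory GRing.Theory Num.Theory.
Local Open Scope ring_scope.

Section Defs.
Variable (C : numClosedFieldType) (n : nat).
Implicit Types A X : 'M[C]_n.

Definition ctmx A : 'M[C]_n := (map_mx Num.conj A)^T.

(* column space equality R(A) = R(B): row spaces of the transposes *)
Definition colspace_eq A (B : 'M[C]_n) : bool := (A^T == B^T)%MS.

Definition is_MP A X : Prop :=
  [/\ A *m X *m A = A, X *m A *m X = X,
      ctmx (A *m X) = A *m X & ctmx (X *m A) = X *m A].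

(* Ind(A): smallest k with R(A^k) = R(A^(k+1)), A^0 = I.  The column spaces
   stabilise at some k <= n, so searching k in 0..n finds the minimum. *)
Definition Ind A : nat :=
  find (fun k => colspace_eq (A ^+ k) (A ^+ k.+1)) (iota 0 n.+1).

Definition is_coreEP A X : Prop :=
  [/\ X *m A *m X = X, colspace_eq X (A ^+ Ind A)
    & colspace_eq (ctmx X) (A ^+ Ind A)].

(* given the core-EP inverse E of A and the MP inverse M of A^m:
   m-weak group inverse  (E^(m+1)) A^m  and m-weak core inverse  WG_m * P_{A^m} *)
Definition WGm (E : 'M[C]_n) A (m : nat) : 'M[C]_n := E ^+ m.+1 *m A ^+ m.
Definition weak_core (E M : 'M[C]_n) A (m : nat) : 'M[C]_n :=
  WGm E A m *m (A ^+ m *m M).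

End Defs.

(* If R(A) = R(A^2), the core-EP inverse E has R(A) = R(E), so E A^2 = A and
   hence E^j A^(j+1) = A for every j; moreover A lies in R(A^m), so the projector
   A^m (A^m)^+ fixes A.  These two facts collapse A A^{#m} A to A E A, which is A
   because A = A^2 T.  Conversely R(A^{#m}) is contained in R(E) = R(A^k) with
   k = Ind A, so if k >= 1 the identity A A^{#m} A = A puts A in R(A^2). *)

From HB Require Import structures.
From mathcomp Require Import all_boot all_order all_algebra.
From mathcomp Require Import reals complex.
Import Order.TTheory GRing.Theory Num.Theory.
Local Open Scope ring_scope.

Section ColumnSpaces.
Context {F : fieldType}.

Lemma colsubmxP m n p (A : 'M[F]_(m, n)) (B : 'M[F]_(m, p)) :
  reflect (exists D, A = B *m D) (A^T <= B^T)%MS.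
Proof.
apply: (iffP submxP) => [[D defA] | [D ->]]; last by exists D^T; rewrite trmx_mul.
by exists D^T; rewrite -[A]trmxK defA trmx_mul trmxK.
Qed.

Lemma colsubmx_exp {n} (A : 'M[F]_n) {i j} :
  (i <= j)%N -> ((A ^+ j)^T <= (A ^+ i)^T)%MS.
Proof.
by move=> le_ij; apply/colsubmxP; exists (A ^+ (j - i)); rewrite mulmxE -exprD subnKC.
Qed.

End ColumnSpaces.

Section Index.
Variables (C : numClosedFieldType) (n : nat) (A : 'M[C]_n).

Lemma colspace_eq_expSE k :
  colspace_eq (A ^+ k) (A ^+ k.+1) = ((A ^+ k)^T <= (A ^+ k.+1)^T)%MS.
Proof. by rewrite /colspace_eq (colsubmx_exp A (leqnSn k)) andbT. Qed.

Lemma colspace_eq_expS k :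
  colspace_eq (A ^+ k) (A ^+ k.+1) -> colspace_eq (A ^+ k.+1) (A ^+ k.+2).
Proof.
rewrite !colspace_eq_expSE => /colsubmxP[D defAk]; apply/colsubmxP; exists D.
by rewrite [A ^+ k.+1]exprS -mulmxE defAk mulmxA mulmxE -exprS.
Qed.

Lemma colspace_eq_exp_leq i j : (i <= j)%N ->
  colspace_eq (A ^+ i) (A ^+ i.+1) -> colspace_eq (A ^+ j) (A ^+ j.+1).
Proof.
move=> /subnK <-; elim: (j - i)%N => // k IHk /IHk.
by rewrite addSn; apply: colspace_eq_expS.
Qed.

(* Every strict inclusion R(A^(j+1)) < R(A^j) drops the rank, which starts at n. *)
Lemma has_colspace_eq_exp :
  has (fun k => colspace_eq (A ^+ k) (A ^+ k.+1)) (iota 0 n.+1).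
Proof.
apply/negPn/negP => /hasPn unstable.
suff rank_drop j : (j <= n.+1)%N -> (\rank (A ^+ j)^T + j <= n)%N.
  by have := rank_drop n.+1 (leqnn _); rewrite addnS ltnNge leq_addl.
elim: j => [|j IHj] lt_jn; first by rewrite addn0 rank_leq_col.
have /negbTE unstable_j : ~~ colspace_eq (A ^+ j) (A ^+ j.+1).
  by apply: unstable; rewrite mem_iota.
have := mxrank_leqif_sup (colsubmx_exp A (leqnSn j)).
rewrite -colspace_eq_expSE unstable_j => /ltn_leqif lt_rank.
by rewrite addnS; apply: leq_trans (IHj (ltnW lt_jn)); rewrite ltn_add2r lt_rank.
Qed.

Lemma Ind_leqE k : (Ind A <= k)%N = colspace_eq (A ^+ k) (A ^+ k.+1).
Proof.
have hasStable := has_colspace_eq_exp.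
have lt_Ind_n : (Ind A < n.+1)%N by rewrite -[n.+1](size_iota 0) -has_find.
apply/idP/idP => [le_Ind_k | stable_k].
  apply: colspace_eq_exp_leq le_Ind_k _.
  by have := nth_find 0%N hasStable; rewrite nth_iota.
rewrite leqNgt; apply/negP => lt_k_Ind.
have := before_find 0%N lt_k_Ind.
by rewrite nth_iota ?add0n ?stable_k // (ltn_trans lt_k_Ind).
Qed.

Lemma Ind_le1E : (Ind A <= 1)%N = (A^T <= (A ^+ 2)^T)%MS.
Proof. by rewrite Ind_leqE colspace_eq_expSE expr1. Qed.

Lemma inner_inverse_Ind_le1 X :
  (X^T <= (A ^+ Ind A)^T)%MS -> A *m X *m A = A -> (Ind A <= 1)%N.
Proof.
have [-> // | Ind_gt0] := posnP (Ind A).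
move=> /submx_trans /(_ (colsubmx_exp A Ind_gt0)).
rewrite expr1 => /colsubmxP[D ->] inner.
by rewrite Ind_le1E; apply/colsubmxP; exists (D *m A); rewrite -{1}inner !mulmxA mulmxE -expr2.
Qed.

End Index.

Section RingIdentities.
Context {R : pzRingType}.
Implicit Types a e p t : R.

Lemma outer_inverse_range_id {e a q} : e * a * e = e -> a = e * q -> e * a * a = a.
Proof. by move=> eae defa; rewrite {2}defa mulrA eae -defa. Qed.

Lemma expr_range_of_sqr_range {a t} j : a = a * a * t -> a = a ^+ j.+1 * t ^+ j.
Proof.
move=> aat; elim: j => [|j IHj]; first by rewrite expr1 expr0 mulr1.
by rewrite {1}aat {2}IHj mulrA -exprS -mulrA -exprSr.
Qed.

Lemma expr_outer_inverse_id e a j : e * a * a = a -> e ^+ j * a ^+ j.+1 = a.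
Proof.
move=> eaa; elim: j => [|j IHj]; first by rewrite expr0 mul1r expr1.
by rewrite exprSr !exprS -mulrA (mulrA e a) (mulrA (e * a) a) eaa -exprS IHj.
Qed.

Lemma weak_core_inner {e a p t m} : (0 < m)%N ->
  e * a * a = a -> a = a * a * t -> a ^+ m * p * a ^+ m = a ^+ m ->
  a * (e ^+ m.+1 * a ^+ m * (a ^+ m * p)) * a = a.
Proof.
move=> m_gt0 eaa aat pinv.
have aea : a * e * a = a.
  by rewrite {2}aat !mulrA -(mulrA a e a) -(mulrA a (e * a) a) eaa -aat.
have pa : a ^+ m * p * a = a.
  have := expr_range_of_sqr_range m.-1 aat; rewrite prednK // => am.
  by rewrite {2}am mulrA pinv -am.
rewrite -!mulrA (mulrA (a ^+ m) p) pa -exprSr [e ^+ _]exprS -mulrA.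
by rewrite expr_outer_inverse_id // mulrA aea.
Qed.

End RingIdentities.

Theorem theorem4p14 (R : realType) (n : nat) (A : 'M[R[i]]_n) (m : nat)
  (E M : 'M[R[i]]_n) :
  (0 < m)%N ->
  is_coreEP A E ->
  is_MP (A ^+ m) M ->
  A *m weak_core E M A m *m A = A <-> (Ind A <= 1)%N.
Proof.
move=> m_gt0 [EAE /andP[sub_rangeE rangeE_sub] _] [MPM _ _ _].
split=> [inner | Ind_le1].
  apply: inner_inverse_Ind_le1 inner; apply: submx_trans sub_rangeE.
  apply/colsubmxP; exists (E ^+ m *m A ^+ m *m (A ^+ m *m M)).
  by rewrite /weak_core /WGm exprS -!mulmxE !mulmxA.
have [Q defA] : exists Q, A = E *m Q.
  apply/colsubmxP; apply: submx_trans rangeE_sub.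
  by rewrite -[A in A^T]expr1 colsubmx_exp.
have [T aat] : exists T, A = A *m A *m T.
  by move: Ind_le1; rewrite Ind_le1E => /colsubmxP[T defA2]; exists T; rewrite mulmxE -expr2.
rewrite mulmxE in defA aat MPM EAE.
rewrite /weak_core /WGm !mulmxE.
exact: weak_core_inner m_gt0 (outer_inverse_range_id EAE defA) aat MPM.
Qed.
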